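(* In the setting of the context, run top-$k$ constrained beam search ($k$-CBS) with beam width $B$ and let $C_T$ be its final (unpruned) candidate set, and let $F_{(B)}\subseteq C_T$ be the (at most) $B$ pairs of $C_T$ with the largest second coordinate (deterministic tie-breaking). For $\mathsf{dist}\in\{\mathsf{Hamming},\mathsf{Levenshtein}\}$ and $\varepsilon\ge0$ define $$\mathrm{LB}^{(Bk)}_{\varepsilon,\mathsf{dist}}=\sum_{(\mathbf{z}_{\mathrm{pre}}\Vert\mathbf{x},\,\ell)\in C_T\,:\,\mathbf{x}\in\mathbb{B}^{\mathsf{dist}}_{\varepsilon}(\mathbf{z}_{\mathrm{suf}})}\exp(\ell),\qquad \mathrm{LB}^{(B)}_{\varepsilon,\mathsf{dist}}=\sum_{(\mathbf{z}_{\mathrm{pre}}\Vert\mathbf{x},\,\ell)\in F_{(B)}\,:\,\mathbf{x}\in\mathbb{B}^{\mathsf{dist}}_{\varepsilon}(\mathbf{z}_{\mathrm{suf}})}\exp(\ell).$$ Then $\mathrm{LB}^{(Bk)}_{\varepsilon,\mathsf{dist}}\le p^{\mathsf{dist}}_{\mathbf{z},\varepsilon}$ and $\mathrm{LB}^{(B)}_{\varepsilon,\mathsf{dist}}\le\mathrm{LB}^{(Bk)}_{\varepsilon,\mathsf{dist}}$.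
   Context: Let $\mathbb{V}$ be a finite vocabulary containing a designated end-of-sequence token EOS. A language model $\theta$ assigns to every finite token sequence (history) $\mathbf{h}$ a probability distribution $\Pr_\theta(\cdot\mid\mathbf{h})$ on $\mathbb{V}$ with $\Pr_\theta(v\mid\mathbf{h})>0$ for all $v$. For an integer $k\ge1$ and a history $\mathbf{h}$, let $S(\mathbf{h})\subseteq\mathbb{V}$ be the set of $k$ tokens with the largest values of $\Pr_\theta(\cdot\mid\mathbf{h})$ (ties broken by a fixed deterministic rule). The top-$k$ decoding distribution is $\Pr_{\theta,\phi}(v\mid\mathbf{h})=\Pr_\theta(v\mid\mathbf{h})/\sum_{u\in S(\mathbf{h})}\Pr_\theta(u\mid\mathbf{h})$ for $v\in S(\mathbf{h})$ and $0$ otherwise. Fix a prefix $\mathbf{z}_{\mathrm{pre}}\in\mathbb{V}^L$ and a target suffix $\mathbf{z}_{\mathrm{suf}}\in\mathbb{V}^T$. For $\mathbf{x}\in\mathbb{V}^T$, $\Pr_{\theta,\phi}(\mathbf{x}\mid\mathbf{z}_{\mathrm{pre}})=\prod_{t=1}^T\Pr_{\theta,\phi}(x_t\mid\mathbf{z}_{\mathrm{pre}}\Vert x_{1:t-1})$ ($\Vert$ is concatenation). For $\mathbf{b},\mathbf{c}\in\mathbb{V}^T$, $\mathsf{Hamming}(\mathbf{b},\mathbf{c})=\#\{t: b_t\ne c_t\}$ and $\mathsf{Levenshtein}(\mathbf{b},\mathbf{c})$ is the minimum number of unit-cost single-token substitutions, insertions and deletions transforming $\mathbf{b}$ into $\mathbf{c}$.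 The $\varepsilon$-ball is $\mathbb{B}^{\mathsf{dist}}_{\varepsilon}(\mathbf{z}_{\mathrm{suf}})=\{\mathbf{v}\in\mathbb{V}^T:\mathsf{dist}(\mathbf{v},\mathbf{z}_{\mathrm{suf}})\le\varepsilon\}$, and $p^{\mathsf{dist}}_{\mathbf{z},\varepsilon}=\sum_{\mathbf{v}\in\mathbb{B}^{\mathsf{dist}}_{\varepsilon}(\mathbf{z}_{\mathrm{suf}})}\Pr_{\theta,\phi}(\mathbf{v}\mid\mathbf{z}_{\mathrm{pre}})$. $k$-CBS with beam width $B$: set $L_0=\{(\mathbf{z}_{\mathrm{pre}},0)\}$. For $t=1,\dots,T$: let $C_t=\{(\mathbf{h}\Vert v,\ \ell+\log\Pr_{\theta,\phi}(v\mid\mathbf{h})):(\mathbf{h},\ell)\in L_{t-1},\ v\in S(\mathbf{h})\}$. If $t=T$, output $C_T$. If $t<T$, delete from $C_t$ every pair whose history ends in EOS, and let $L_t$ be the (at most) $B$ pairs of $C_t$ with the largest second coordinate (deterministic tie-breaking). Every pair in $C_T$ has the form $(\mathbf{z}_{\mathrm{pre}}\Vert\mathbf{x},\ell)$ with $\mathbf{x}\in\mathbb{V}^T$. *)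

From HB Require Import structures.
From mathcomp Require Import all_boot all_order all_algebra.
From mathcomp Require Import boolp reals sequences exp.
Set Implicit Arguments. Unset Strict Implicit. Unset Printing Implicit Defensive.
Import Order.TTheory GRing.Theory Num.Theory.
Local Open Scope ring_scope.

Section Defs.
Context {R : realType} {V : finType}.

(* S(h): the k tokens with largest P h, ties broken deterministically by the
   (stable) order of enum V. *)
Definition topk (k : nat) (P : seq V -> V -> R) (h : seq V) : seq V :=
  take k (sort (fun u v => P h v <= P h u) (enum V)).

Definition topk_prob (k : nat) (P : seq V -> V -> R) (h : seq V) (v : V) : R :=
  if v \in topk k P h then P h v / \sum_(u <- topk k P h) P h u else 0.

Fixpoint seq_prob (k : nat) (P : seq V -> V -> R) (h : seq V) (x : seq V) : R :=
  match x with
  | [::] => 1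
  | v :: x' => topk_prob k P h v * seq_prob k P (rcons h v) x'
  end.

(* candidates (history, log-score) *)
Definition cand := (seq V * R)%type.

Definition expand (k : nat) (P : seq V -> V -> R) (L : seq cand) : seq cand :=
  flatten [seq [seq (rcons c.1 v, c.2 + ln (topk_prob k P c.1 v)) | v <- topk k P c.1]
          | c <- L].

Definition endsEOS (eos : V) (h : seq V) : bool := (0 < size h)%N && (last eos h == eos).

(* the (at most) B pairs with the largest second coordinate; ties broken
   deterministically by the (stable) order of the list *)
Definition topB (B : nat) (C : seq cand) : seq cand :=
  take B (sort (fun a b : cand => b.2 <= a.2) C).

Definition beam_step (k B : nat) (eos : V) (P : seq V -> V -> R) (L : seq cand) :=
  topB B [seq c <- expand k P L | ~~ endsEOS eos c.1].

(* final unpruned candidate set C_T of k-CBS (T >= 1) *)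
Definition kCBS_final (k B : nat) (eos : V) (P : seq V -> V -> R) (pre : seq V) (T : nat)
  : seq cand :=
  expand k P (iter T.-1 (beam_step k B eos P) [:: (pre, 0)]).

(* Hamming distance (for sequences of equal length) *)
Definition hamming (b c : seq V) : nat := count (fun p => p.1 != p.2) (zip b c).

Definition edit1 (b c : seq V) : Prop :=
  (exists s1 s2 x y, b = s1 ++ x :: s2 /\ c = s1 ++ y :: s2) \/
  (exists s1 s2 y, b = s1 ++ s2 /\ c = s1 ++ y :: s2) \/
  (exists s1 s2 x, b = s1 ++ x :: s2 /\ c = s1 ++ s2).

Fixpoint edits (n : nat) (b c : seq V) : Prop :=
  match n with
  | 0 => b = c
  | n'.+1 => exists d, edit1 b d /\ edits n' d c
  end.

Lemma edits_cat m n a b c : edits m a b -> edits n b c -> edits (m + n) a c.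
Proof.
elim: m a => [|m IH] a /=; first by move=> -> .
by case=> d [e1 hd] hbc; exists d; split=> //; apply: IH hd hbc.
Qed.

Lemma edits_ex (b c : seq V) : exists n, `[< edits n b c >].
Proof.
have del : forall s : seq V, edits (size s) s [::].
  elim=> [|x s IH] //=; exists s; split=> //.
  by right; right; exists [::], s, x.
have ins : forall s : seq V, edits (size s) [::] s.
  elim=> [|y s IH] //.
  have h1 : edits 1 s (y :: s).
    by exists (y :: s); split=> //; right; left; exists [::], s, y.
  by have := edits_cat IH h1; rewrite addn1.
by exists (size b + size c)%N; apply/asboolP; apply: edits_cat (del b) (ins c).
Qed.

Definition levenshtein (b c : seq V) : nat := ex_minn (edits_ex b c).

Definition in_ball (dist : seq V -> seq V -> nat) (eps : R) (zsuf x : seq V) : bool :=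
  (dist x zsuf)%:R <= eps.

Definition p_ball (k : nat) (P : seq V -> V -> R) (dist : seq V -> seq V -> nat)
  (eps : R) (pre zsuf : seq V) : R :=
  \sum_(x : (size zsuf).-tuple V | in_ball dist eps zsuf x) seq_prob k P pre x.

Definition LB (C : seq cand) (pre : seq V) (dist : seq V -> seq V -> nat) (eps : R)
  (zsuf : seq V) : R :=
  \sum_(c <- C | in_ball dist eps zsuf (drop (size pre) c.1)) expR c.2.

End Defs.

From HB Require Import structures.
From mathcomp Require Import all_boot all_order all_algebra.
From mathcomp Require Import boolp reals sequences exp.
Import Order.TTheory GRing.Theory Num.Theory.
Local Open Scope ring_scope.

(* Every candidate of C_T is (pre ++ x, ln Pr(x | pre)) for a suffix x of
   length T, and distinct candidates have distinct suffixes: the beam only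
   ever extends histories by distinct tokens, adds log-probabilities, and
   drops candidates.  Hence LB^(Bk) is a sum of Pr(x | pre) over distinct
   suffixes in the ball, a sub-sum of p_ball; LB^(B) is in turn the sub-sum
   of the nonnegative terms exp l of LB^(Bk) over a prefix of a permutation
   of C_T. *)

Section NonnegativeSums.
Variable R : numDomainType.

Lemma ler_sum_uniq_sub (I : eqType) (s t : seq I) (Q : pred I) (F : I -> R) :
  uniq s -> uniq t -> {subset s <= t} -> (forall i, 0 <= F i) ->
  \sum_(i <- s | Q i) F i <= \sum_(i <- t | Q i) F i.
Proof.
move=> s_uniq t_uniq s_sub_t F_ge0.
have s_perm : perm_eq [seq i <- t | i \in s] s.
  apply: uniq_perm; rewrite ?filter_uniq // => i.
  by rewrite mem_filter; apply: andb_idr; apply: s_sub_t.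
have -> : \sum_(i <- s | Q i) F i = \sum_(i <- t | Q i && (i \in s)) F i.
  rewrite -(perm_big _ s_perm) big_filter_cond.
  by apply: eq_bigl => i; rewrite andbC.
by rewrite [leRHS](bigID (mem s)) /= lerDl sumr_ge0.
Qed.

Lemma ler_sum_take (I : Type) (n : nat) (s : seq I) (Q : pred I) (F : I -> R) :
  (forall i, 0 <= F i) ->
  \sum_(i <- take n s | Q i) F i <= \sum_(i <- s | Q i) F i.
Proof.
move=> F_ge0; rewrite -[in leRHS](cat_take_drop n s) big_cat /= lerDl.
exact: sumr_ge0.
Qed.

End NonnegativeSums.

Section TopkSearch.
Variables (R : realType) (V : finType) (P : seq V -> V -> R) (k : nat).
Hypothesis P_gt0 : forall h v, 0 < P h v.

Lemma seq_prob_rcons h x v :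
  seq_prob k P h (rcons x v) = seq_prob k P h x * topk_prob k P (h ++ x) v.
Proof.
elim: x h => [|u x IH] h /=; first by rewrite cats0 mul1r mulr1.
by rewrite IH cat_rcons mulrA.
Qed.

Lemma topk_uniq h : uniq (topk k P h).
Proof. by rewrite /topk take_uniq // sort_uniq enum_uniq. Qed.

Lemma topk_prob_ge0 h v : 0 <= topk_prob k P h v.
Proof.
rewrite /topk_prob; case: ifP => // _.
by apply: divr_ge0; [exact: ltW | apply: sumr_ge0 => *; exact: ltW].
Qed.

Lemma topk_prob_gt0 h v : v \in topk k P h -> 0 < topk_prob k P h v.
Proof.
move=> v_topk; rewrite /topk_prob v_topk divr_gt0 //.
rewrite (bigD1_seq v) ?topk_uniq //= ltr_wpDr //.
by apply: sumr_ge0 => *; exact: ltW.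
Qed.

Lemma seq_prob_ge0 h x : 0 <= seq_prob k P h x.
Proof.
elim: x h => [|u x IH] h /=; first exact: ler01.
exact: mulr_ge0 (topk_prob_ge0 _ _) (IH _).
Qed.

Definition scored_beam (pre : seq V) (t : nat) (L : seq (@cand R V)) : Prop :=
  uniq (map fst L) /\
  {in L, forall c, exists x, [/\ c.1 = pre ++ x, size x = t &
                                 expR c.2 = seq_prob k P pre x]}.

Lemma map_fst_expand L : map fst (expand k P L) =
  flatten [seq [seq rcons c.1 v | v <- topk k P c.1] | c <- L].
Proof. by elim: L => //= c L <-; rewrite map_cat -map_comp. Qed.

Lemma uniq_map_fst_expand L : uniq (map fst L) -> uniq (map fst (expand k P L)).
Proof.
rewrite map_fst_expand; elim: L => //= c L IH /andP [c_notin L_uniq].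
rewrite cat_uniq IH // andbT map_inj_uniq ?topk_uniq //=; last first.
  exact: rcons_injr.
apply/hasPn => _ /flattenP [_ /mapP [c' c'L ->]] /mapP [w _ ->].
apply/mapP => -[v _ /rcons_inj [same_hist _]].
by move: c_notin; rewrite -same_hist map_f.
Qed.

Lemma scored_beam_expand pre t L :
  scored_beam pre t L -> scored_beam pre t.+1 (expand k P L).
Proof.
case=> L_uniq L_scored; split; first exact: uniq_map_fst_expand.
move=> _ /flattenP [_ /mapP [c cL ->]] /mapP [v v_topk ->] /=.
have [x [c_hist x_size x_score]] := L_scored c cL.
rewrite c_hist in v_topk *.
exists (rcons x v); split; rewrite ?rcons_cat ?size_rcons ?x_size //.
by rewrite expRD x_score seq_prob_rcons lnK // posrE topk_prob_gt0.
Qed.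

Lemma scored_beam_filter pre t (p : pred cand) L :
  scored_beam pre t L -> scored_beam pre t (filter p L).
Proof.
case=> L_uniq L_scored; split.
  exact: subseq_uniq (map_subseq _ (filter_subseq _ _)) L_uniq.
by move=> c; rewrite mem_filter => /andP [_ /L_scored].
Qed.

Lemma scored_beam_topB pre t B L :
  scored_beam pre t L -> scored_beam pre t (topB B L).
Proof.
case=> L_uniq L_scored; split.
  rewrite /topB map_take take_uniq //.
  by rewrite (perm_uniq (perm_map _ (permEl (perm_sort _ _)))).
by move=> c /mem_take; rewrite mem_sort => /L_scored.
Qed.

Lemma scored_beam_iter B eos pre n :
  scored_beam pre n (iter n (beam_step k B eos P) [:: (pre, 0)]).
Proof.
elim: n => [|n IH] /=.
  by split=> // c; rewrite inE => /eqP -> /=; exists [::]; rewrite cats0 expR0.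
apply: scored_beam_topB; apply: scored_beam_filter.
exact: scored_beam_expand.
Qed.

Lemma scored_beam_kCBS_final B eos pre T : (0 < T)%N ->
  scored_beam pre T (kCBS_final k B eos P pre T).
Proof.
move=> T_gt0; rewrite /kCBS_final -{1}(prednK T_gt0).
by apply: scored_beam_expand; exact: scored_beam_iter.
Qed.

Lemma p_ball_seqE dist eps pre zsuf : p_ball k P dist eps pre zsuf =
  \sum_(x <- map val (index_enum ((size zsuf).-tuple V))
          | in_ball dist eps zsuf x) seq_prob k P pre x.
Proof. by rewrite big_map. Qed.

Lemma LB_le_p_ball dist eps pre zsuf C :
  scored_beam pre (size zsuf) C ->
  LB C pre dist eps zsuf <= p_ball k P dist eps pre zsuf.
Proof.
case=> C_uniq C_scored; pose suffix (c : @cand R V) := drop (size pre) c.1.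
have suffixE c : c \in C -> c.1 = pre ++ suffix c.
  by case/C_scored=> x [c_hist _ _]; rewrite /suffix c_hist drop_size_cat.
have -> : LB C pre dist eps zsuf =
    \sum_(x <- map suffix C | in_ball dist eps zsuf x) seq_prob k P pre x.
  rewrite big_map /LB big_seq_cond [RHS]big_seq_cond.
  apply: eq_bigr => c /andP [cC _].
  have [x [c_hist _ ->]] := C_scored c cC.
  by rewrite /suffix c_hist drop_size_cat.
rewrite p_ball_seqE ler_sum_uniq_sub //.
- have fst_C : map fst C = map (cat pre) (map suffix C).
    by rewrite -map_comp; apply/eq_in_map => c /suffixE.
  by move: C_uniq; rewrite fst_C => /map_uniq.
- by rewrite map_inj_uniq ?index_enum_uniq //; exact: val_inj.
- move=> _ /mapP [c cC ->]; have [x [c_hist x_size _]] := C_scored c cC.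
  have x_tuple : size x == size zsuf by rewrite x_size.
  rewrite /suffix c_hist drop_size_cat // (_ : x = Tuple x_tuple) //.
  by rewrite map_f ?mem_index_enum.
- by move=> x; exact: seq_prob_ge0.
Qed.

End TopkSearch.

Lemma LB_topB_le (R : realType) (V : finType) B (C : seq (@cand R V))
  pre dist eps zsuf :
  LB (topB B C) pre dist eps zsuf <= LB C pre dist eps zsuf.
Proof.
rewrite /LB /topB; set ranked := sort _ C.
have ranked_perm : perm_eq ranked C by rewrite perm_sort.
rewrite -[leRHS](perm_big _ ranked_perm).
by apply: ler_sum_take => c; exact: expR_ge0.
Qed.

Theorem corollary4 (R : realType) (V : finType) (eos : V) (P : seq V -> V -> R)
  (k B : nat) (pre zsuf : seq V) (dist : seq V -> seq V -> nat) (eps : R) :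
  (forall h v, 0 < P h v) ->
  (forall h, \sum_(v : V) P h v = 1) ->
  (0 < k)%N -> (k <= #|V|)%N -> (0 < B)%N -> (0 < size zsuf)%N ->
  (dist = @hamming V \/ dist = @levenshtein V) ->
  0 <= eps ->
  let CT := kCBS_final k B eos P pre (size zsuf) in
  let FB := topB B CT in
  LB CT pre dist eps zsuf <= p_ball k P dist eps pre zsuf /\
  LB FB pre dist eps zsuf <= LB CT pre dist eps zsuf.
Proof.
move=> P_gt0 _ _ _ _ T_gt0 _ _ CT FB; split; last exact: LB_topB_le.
apply: LB_le_p_ball; first exact: P_gt0.
exact: scored_beam_kCBS_final.
Qed.
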